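(* Let $\alpha\in\mathbb{R}\setminus\{0\}$, let $h(z)=f_Z(z;\alpha)$ be the $BASLa_2(\alpha)$ density and let $$h_1(z)=\frac{4+8\alpha^2z^2+\alpha^4z^4}{C_2(\alpha)}\cdot\frac12 e^{-|z|},\qquad z\in\mathbb{R}$$ (the symmetric component density). Then $h_1$ is a probability density and $$\sup_{z\in\mathbb{R}}\frac{h(z)}{h_1(z)}=\frac{3+2\sqrt2}{3}.$$
   Context: For $\alpha\in\mathbb{R}$ let $C_2(\alpha)=4(1+4\alpha^2+6\alpha^4)$. A real random variable $Z$ has the Balakrishnan alpha skew Laplace distribution with parameter $\alpha$, written $Z\sim BASLa_2(\alpha)$, if it has probability density $$f_Z(z;\alpha)=\frac{\big[(1-\alpha z)^2+1\big]^2}{C_2(\alpha)}\cdot\frac12 e^{-|z|},\qquad z\in\mathbb{R}.$$ *)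

From Stdlib Require Import Reals Lra.
Open Scope R_scope.

Definition C2 (alpha : R) : R := 4 * (1 + 4 * alpha ^ 2 + 6 * alpha ^ 4).

Definition f_BASLa2 (alpha z : R) : R :=
  ((1 - alpha * z) ^ 2 + 1) ^ 2 / C2 alpha * (/ 2 * exp (- Rabs z)).

Definition h1 (alpha z : R) : R :=
  (4 + 8 * alpha ^ 2 * z ^ 2 + alpha ^ 4 * z ^ 4) / C2 alpha
    * (/ 2 * exp (- Rabs z)).

Definition is_prob_density (f : R -> R) : Prop :=
  (forall z, 0 <= f z) /\
  (forall a b, inhabited (Riemann_integrable f a b)) /\
  (forall eps, 0 < eps -> exists M0, forall M (pr : Riemann_integrable f (- M) M),
     M0 <= M -> Rabs (RiemannInt pr - 1) < eps).

(* The ratio [h / h1] depends on [z] only through [t = alpha z] and equals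
   [((1 - t)^2 + 1)^2 / (4 + 8 t^2 + t^4)].  With [r = sqrt 2],
   [(3 + 2 r)(4 + 8 t^2 + t^4) - 3 ((1 - t)^2 + 1)^2 = 2 (t + r)^2 (r t^2 + 2 t + 2 r)],
   and the last factor has negative discriminant, so the ratio is at most
   [(3 + 2 r)/3], with equality at [t = -r].
   For the density, [h1] is even and, for its quartic numerator [p],
   [p(z) e^(-z)] has the primitive
   [-(p + p' + p'' + p''' + p'''')(z) e^(-z)]; at [z = 0] that polynomial
   equals [C_2(alpha)], so the mass of [[-M, M]] is [1] minus a polynomial
   times [e^(-M)], which is [O(1/M)]. *)

From Stdlib Require Import Reals Lra Psatz.
From Coquelicot Require Import Coquelicot.
Open Scope R_scope.

Lemma is_lub_iff (E F : R -> Prop) (m : R) :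
  (forall y, E y <-> F y) -> is_lub E m -> is_lub F m.
Proof.
  intros EF [ub least]; split.
  - intros y Fy; apply ub, EF, Fy.
  - intros b ubF; apply least; intros y Ey; apply ubF, EF, Ey.
Qed.

Lemma pow_div_fact_le_exp (n : nat) (x : R) :
  0 <= x -> x ^ n / INR (Factorial.fact n) <= exp x.
Proof.
  intros x_ge0.
  set (term := fun k => x ^ k / INR (Factorial.fact k)).
  assert (term_ge0 : forall k, 0 <= term k).
  { intros k; apply Rdiv_le_0_compat; [now apply pow_le | apply INR_fact_lt_0]. }
  apply Rle_trans with (sum_f_R0 term n); [|now apply exp_ge_taylor].
  destruct n as [|n]; [apply Rle_refl|].
  rewrite tech5; pose proof (cond_pos_sum term n term_ge0); unfold term at 2; lra.
Qed.

Lemma is_RInt_even (f : R -> R) (M I : R) :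
  (forall x, f (- x) = f x) -> is_RInt f 0 M I -> is_RInt f (- M) M (2 * I).
Proof.
  intros f_even int0M.
  assert (intM0 : is_RInt f (- M) 0 I).
  { assert (intM0_opp : is_RInt f (- - M) (- 0) (- I)).
    { rewrite Ropp_involutive, Ropp_0; now apply (is_RInt_swap (V := R_NormedModule)). }
    pose proof (is_RInt_opp _ _ _ _ (is_RInt_comp_opp _ _ _ _ intM0_opp)) as H.
    simpl in H; rewrite Ropp_involutive in H.
    apply is_RInt_ext with (2 := H); intros y _.
    now rewrite opp_opp, f_even. }
  replace (2 * I) with (I + I) by ring.
  now apply (is_RInt_Chasles (V := R_NormedModule)) with 0.
Qed.

Lemma is_prob_density_of_tail (f : R -> R) (B : R) :
  (forall z, 0 <= f z) -> (forall z, continuity_pt f z) -> 0 <= B ->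
  (forall M, 1 <= M -> Rabs (RInt f (- M) M - 1) <= B / M) ->
  is_prob_density f.
Proof.
  intros f_ge0 f_cont B_ge0 tail; split; [exact f_ge0 | split].
  - intros a b; constructor; destruct (Rle_dec a b).
    + apply continuity_implies_RiemannInt; auto.
    + apply RiemannInt_P1, continuity_implies_RiemannInt; [lra | auto].
  - intros eps eps_gt0; exists (1 + B / eps); intros M pr M_large.
    rewrite <- RInt_Reals.
    assert (0 <= B / eps) by (apply Rdiv_le_0_compat; lra).
    assert (B_lt : B < eps * M).
    { assert (eps * (B / eps) = B) by (field; lra); nra. }
    apply Rle_lt_trans with (B / M); [apply tail; lra|].
    apply Rmult_lt_reg_r with M; [nra|].
    unfold Rdiv; rewrite Rmult_assoc, Rinv_l; lra.
Qed.

Definition skew_weight (t : R) : R := ((1 - t) ^ 2 + 1) ^ 2.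
Definition sym_weight (t : R) : R := 4 + 8 * t ^ 2 + t ^ 4.

Lemma sym_weight_gt0 (t : R) : 0 < sym_weight t.
Proof. unfold sym_weight; nra. Qed.

Lemma C2_gt0 (alpha : R) : 0 < C2 alpha.
Proof. unfold C2; nra. Qed.

Lemma f_BASLa2_div_h1 (alpha z : R) :
  f_BASLa2 alpha z / h1 alpha z = skew_weight (alpha * z) / sym_weight (alpha * z).
Proof.
  pose proof (C2_gt0 alpha); pose proof (exp_pos (- Rabs z)).
  pose proof (sym_weight_gt0 (alpha * z)).
  unfold f_BASLa2, h1, skew_weight, sym_weight in *.
  field; split; [lra | nra].
Qed.

Lemma weight_gap_factor (r t : R) : r * r = 2 ->
  (3 + 2 * r) * sym_weight t - 3 * skew_weight t
  = 2 * (t + r) ^ 2 * (r * t ^ 2 + 2 * t + 2 * r).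
Proof.
  intros r2; unfold sym_weight, skew_weight.
  transitivity (2 * (t + r) ^ 2 * (r * t ^ 2 + 2 * t + 2 * r)
                - (r * r - 2) * (4 * t ^ 3 + 2 * r * t ^ 2 + 12 * t + 4 * r)).
  - ring.
  - rewrite r2; ring.
Qed.

Lemma skew_weight_le (t : R) : 3 * skew_weight t <= (3 + 2 * sqrt 2) * sym_weight t.
Proof.
  pose proof (sqrt_sqrt 2 ltac:(lra)) as r2.
  pose proof (sqrt_lt_R0 2 ltac:(lra)) as r_gt0.
  set (r := sqrt 2) in *.
  assert (quad_gt0 : 0 < r * t ^ 2 + 2 * t + 2 * r).
  { apply Rmult_lt_reg_l with r; [lra | nra]. }
  assert (0 <= 2 * (t + r) ^ 2 * (r * t ^ 2 + 2 * t + 2 * r)).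
  { apply Rmult_le_pos; [apply Rmult_le_pos; [lra | apply pow2_ge_0] | lra]. }
  pose proof (weight_gap_factor r t r2); lra.
Qed.

Lemma weight_ratio_at_neg_sqrt2 :
  skew_weight (- sqrt 2) / sym_weight (- sqrt 2) = (3 + 2 * sqrt 2) / 3.
Proof.
  pose proof (sqrt_sqrt 2 ltac:(lra)) as r2.
  set (r := sqrt 2) in *.
  unfold skew_weight, sym_weight.
  replace ((1 - - r) ^ 2 + 1) with (4 + 2 * r) by (ring_simplify; lra).
  replace (4 + 8 * (- r) ^ 2 + (- r) ^ 4) with 24 by (ring_simplify; nra).
  field_simplify; nra.
Qed.

Lemma weight_ratio_is_lub :
  is_lub (fun y => exists t, y = skew_weight t / sym_weight t) ((3 + 2 * sqrt 2) / 3).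
Proof.
  split.
  - intros y [t ->]; pose proof (sym_weight_gt0 t); pose proof (skew_weight_le t).
    apply Rmult_le_reg_r with (3 * sym_weight t); [lra|].
    replace (skew_weight t / sym_weight t * (3 * sym_weight t))
      with (3 * skew_weight t) by (field; lra).
    replace ((3 + 2 * sqrt 2) / 3 * (3 * sym_weight t))
      with ((3 + 2 * sqrt 2) * sym_weight t) by field.
    lra.
  - intros b ub; apply ub; exists (- sqrt 2).
    now rewrite weight_ratio_at_neg_sqrt2.
Qed.

Section SymmetricComponent.

Variable alpha : R.

Definition h1_poly (z : R) : R := 4 + 8 * alpha ^ 2 * z ^ 2 + alpha ^ 4 * z ^ 4.

Definition h1_primitive_poly (z : R) : R :=
  alpha ^ 4 * z ^ 4 + 4 * alpha ^ 4 * z ^ 3 + (8 * alpha ^ 2 + 12 * alpha ^ 4) * z ^ 2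
  + (16 * alpha ^ 2 + 24 * alpha ^ 4) * z + (4 + 16 * alpha ^ 2 + 24 * alpha ^ 4).

Definition h1_primitive (z : R) : R :=
  - h1_primitive_poly z * exp (- z) / (2 * C2 alpha).

Lemma h1_primitive_poly_0 : h1_primitive_poly 0 = C2 alpha.
Proof. unfold h1_primitive_poly, C2; ring. Qed.

Lemma is_derive_h1_primitive (x : R) :
  is_derive h1_primitive x (h1_poly x / C2 alpha * (/ 2 * exp (- x))).
Proof.
  pose proof (C2_gt0 alpha).
  unfold h1_primitive, h1_primitive_poly, h1_poly.
  auto_derive; [lra|]. field; lra.
Qed.

Lemma h1_even (z : R) : h1 alpha (- z) = h1 alpha z.
Proof. unfold h1; rewrite Rabs_Ropp; do 2 f_equal; ring. Qed.

Lemma h1_ge0 (z : R) : 0 <= h1 alpha z.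
Proof.
  pose proof (C2_gt0 alpha); pose proof (exp_pos (- Rabs z)).
  pose proof (sym_weight_gt0 (alpha * z)) as w_gt0; unfold sym_weight in w_gt0.
  unfold h1; apply Rmult_le_pos; [apply Rdiv_le_0_compat; nra | lra].
Qed.

Lemma h1_continuous (z : R) : continuity_pt (h1 alpha) z.
Proof.
  apply continuity_pt_filterlim.
  set (half := fun u => h1_poly u / C2 alpha * (/ 2 * exp (- u))).
  apply (continuous_ext (fun z => half (Rabs z))).
  { intros x; unfold half, h1, h1_poly.
    replace (x ^ 4) with ((x ^ 2) ^ 2) by ring.
    replace (Rabs x ^ 4) with ((Rabs x ^ 2) ^ 2) by ring.
    now rewrite pow2_abs. }
  apply continuous_comp; [apply continuous_Rabs|].
  apply (ex_derive_continuous (V := R_NormedModule)).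
  unfold half, h1_poly; auto_derive; trivial.
Qed.

Lemma is_RInt_h1_half (M : R) :
  0 <= M -> is_RInt (h1 alpha) 0 M (h1_primitive M - h1_primitive 0).
Proof.
  intros M_ge0.
  apply is_RInt_ext with (fun x => h1_poly x / C2 alpha * (/ 2 * exp (- x))).
  { intros x; rewrite Rmin_left, Rmax_right by lra; intros Hx.
    unfold h1, h1_poly; now rewrite Rabs_right by lra. }
  apply (is_RInt_derive h1_primitive).
  - intros x _; apply is_derive_h1_primitive.
  - intros x _; apply (ex_derive_continuous (V := R_NormedModule)).
    unfold h1_poly; auto_derive; trivial.
Qed.

Lemma is_RInt_h1 (M : R) : 0 <= M ->
  is_RInt (h1 alpha) (- M) M (1 - h1_primitive_poly M * exp (- M) / C2 alpha).
Proof.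
  intros M_ge0; pose proof (C2_gt0 alpha).
  replace (1 - h1_primitive_poly M * exp (- M) / C2 alpha)
    with (2 * (h1_primitive M - h1_primitive 0)).
  - apply is_RInt_even; [apply h1_even | now apply is_RInt_h1_half].
  - unfold h1_primitive; rewrite h1_primitive_poly_0, Ropp_0, exp_0; field; lra.
Qed.

Lemma h1_primitive_poly_bounds (M : R) : 1 <= M ->
  0 <= h1_primitive_poly M <= (4 + 40 * alpha ^ 2 + 65 * alpha ^ 4) * M ^ 4.
Proof.
  intros M_ge1; unfold h1_primitive_poly.
  assert (0 <= alpha ^ 2) by nra. assert (0 <= alpha ^ 4) by nra.
  assert (1 <= M ^ 2) by nra. assert (M <= M ^ 2) by nra.
  assert (M ^ 2 <= M ^ 3) by nra. assert (M ^ 3 <= M ^ 4) by nra.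
  split; nra.
Qed.

Lemma h1_tail_bound (M : R) : 1 <= M ->
  Rabs (RInt (h1 alpha) (- M) M - 1)
  <= 120 * (4 + 40 * alpha ^ 2 + 65 * alpha ^ 4) / C2 alpha / M.
Proof.
  intros M_ge1; set (K := 4 + 40 * alpha ^ 2 + 65 * alpha ^ 4).
  pose proof (C2_gt0 alpha); pose proof (exp_pos M).
  destruct (h1_primitive_poly_bounds M M_ge1) as [S_ge0 S_le]; fold K in S_le.
  assert (exp_ge : M ^ 5 / 120 <= exp M).
  { replace 120 with (INR (Factorial.fact 5)) by (simpl; lra).
    apply pow_div_fact_le_exp; lra. }
  rewrite (is_RInt_unique _ _ _ _ (is_RInt_h1 M ltac:(lra))).
  replace (1 - h1_primitive_poly M * exp (- M) / C2 alpha - 1)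
    with (- (h1_primitive_poly M / (C2 alpha * exp M)))
    by (rewrite exp_Ropp; field; lra).
  rewrite Rabs_Ropp, Rabs_right by (apply Rle_ge, Rdiv_le_0_compat; nra).
  assert (M ^ 4 * M = M ^ 5) by ring.
  apply Rmult_le_reg_r with (C2 alpha * exp M * M).
  { apply Rmult_lt_0_compat; [apply Rmult_lt_0_compat|]; lra. }
  replace (h1_primitive_poly M / (C2 alpha * exp M) * (C2 alpha * exp M * M))
    with (h1_primitive_poly M * M) by (field; lra).
  replace (120 * K / C2 alpha / M * (C2 alpha * exp M * M))
    with (120 * K * exp M) by (field; lra).
  assert (0 <= K) by (unfold K; nra).
  assert (h1_primitive_poly M * M <= K * M ^ 5) by nra.
  nra.
Qed.

Lemma h1_is_prob_density : is_prob_density (h1 alpha).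
Proof.
  apply (is_prob_density_of_tail _ (120 * (4 + 40 * alpha ^ 2 + 65 * alpha ^ 4) / C2 alpha)).
  - apply h1_ge0.
  - apply h1_continuous.
  - pose proof (C2_gt0 alpha); apply Rdiv_le_0_compat; nra.
  - apply h1_tail_bound.
Qed.

End SymmetricComponent.

Theorem mainTheorem9 (alpha : R) (Halpha : alpha <> 0) :
  is_prob_density (h1 alpha) /\
  is_lub (fun y => exists z : R, y = f_BASLa2 alpha z / h1 alpha z)
         ((3 + 2 * sqrt 2) / 3).
Proof.
  split; [apply h1_is_prob_density|].
  eapply is_lub_iff; [|exact weight_ratio_is_lub].
  intros y; split.
  - intros [t ->]; exists (t / alpha).
    rewrite f_BASLa2_div_h1; now replace (alpha * (t / alpha)) with t by (field; auto).
  - intros [z ->]; exists (alpha * z); apply f_BASLa2_div_h1.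
Qed.
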